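(* Let $n,m$ be positive integers, $\Lambda:\mathbb{C}^{n\times n}\to\mathbb{C}^{m\times m}$ linear and $Y\in\mathbb{C}^{m\times m}$. For a real parameter $k\ge1$, call a pair $(\Phi_I,\Phi_V)$ of Hermitian operators on $\mathcal{H}_{A_1}\otimes\mathcal{H}_{B_1}=\mathbb{C}^n\otimes\mathbb{C}^n$ $k$-feasible if \[ \Phi_V=V\Phi_I,\quad \Phi_I+\Phi_V\ge0,\quad \Phi_I-\Phi_V\ge0,\quad \Phi_I^{T_{A_1}}+k\Phi_V^{T_{A_1}}\ge0,\quad \Phi_I^{T_{A_1}}\ge0, \] \[ k^2\operatorname{Tr}(\Phi_I)+k\operatorname{Tr}(\Phi_V)=1,\qquad (\Lambda_{A_1}\otimes\mathrm{id}_{B_1})(k\Phi_I+\Phi_V)=Y\otimes\operatorname{Tr}_{A_1}(k\Phi_I+\Phi_V). \] If $(\Phi_I,\Phi_V)$ is $k$-feasible with $k\ge1$, then for every real $k'\ge k$ there is a $k'$-feasible pair $(\Phi_I',\Phi_V')$ with $k'^2\Phi_I'+k'\Phi_V'=k^2\Phi_I+k\Phi_V$.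
   Context: $V$ is the swap operator on $\mathbb{C}^n\otimes\mathbb{C}^n$; $T_{A_1}$ denotes the partial transpose on the first factor; $\operatorname{Tr}_{A_1}$ is the partial trace over the first factor; $\Lambda_{A_1}\otimes\mathrm{id}_{B_1}$ applies $\Lambda$ to the first factor; $\ge0$ means positive semidefinite. (This is the symmetry-reduced second level of the hierarchy with partial-transpose constraints, in which the rank bound $k$ appears as a parameter.) *)

(* Bipartite operators on C^p (x) C^q are matrices
   'M_(p * q), with the basis vector |a> (x) |b> at index
   mxtens_index (a, b) (the convention of real_closed/mxtens.v, i.e. of the
   Kronecker product  A *t B). *)
From HB Require Import structures.
From mathcomp Require Import all_boot all_order all_algebra.
From mathcomp Require Import reals.
From mathcomp Require Import complex mxtens.

Set Implicit Arguments.
Unset Strict Implicit.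
Unset Printing Implicit Defensive.

Import Order.TTheory GRing.Theory Num.Theory.
Local Open Scope ring_scope.

Section Defs.
Variable C : numClosedFieldType.

Definition adjmx p q (A : 'M[C]_(p, q)) : 'M[C]_(q, p) := (map_mx Num.conj A)^T.

Definition hermitian p (A : 'M[C]_p) : Prop := adjmx A = A.

Definition psd p (A : 'M[C]_p) : Prop :=
  hermitian A /\ forall v : 'cV[C]_p, 0 <= (adjmx v *m A *m v) 0 0.

Local Notation idx := (@mxtens_index _ _).
Local Notation unidx := (@mxtens_unindex _ _).

Definition swapmx n : 'M[C]_(n * n) :=
  \matrix_(i, j) ((((unidx i).1 == (unidx j).2) &&
                   ((unidx i).2 == (unidx j).1))%:R : C).

Definition ptransA p q (X : 'M[C]_(p * q)) : 'M[C]_(p * q) :=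
  \matrix_(i, j) X (idx ((unidx j).1, (unidx i).2))
                   (idx ((unidx i).1, (unidx j).2)).

Definition ptraceA p q (X : 'M[C]_(p * q)) : 'M[C]_q :=
  \matrix_(b, d) \sum_(a < p) X (idx (a, b)) (idx (a, d)).

Definition mapA p q r (L : 'M[C]_p -> 'M[C]_r) (X : 'M[C]_(p * q))
  : 'M[C]_(r * q) :=
  \matrix_(i, j) \sum_(a < p) \sum_(c < p)
     L (delta_mx a c) (unidx i).1 (unidx j).1 *
     X (idx (a, (unidx i).2)) (idx (c, (unidx j).2)).

Definition feasible n m (L : 'M[C]_n -> 'M[C]_m) (Y : 'M[C]_m) (k : C)
    (PhiI PhiV : 'M[C]_(n * n)) : Prop :=
  [/\ hermitian PhiI /\ hermitian PhiV,
      PhiV = swapmx n *m PhiI,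
      [/\ psd (PhiI + PhiV), psd (PhiI - PhiV),
          psd (ptransA PhiI + k *: ptransA PhiV) & psd (ptransA PhiI)],
      k ^+ 2 * \tr PhiI + k * \tr PhiV = 1 &
      mapA L (k *: PhiI + PhiV) = Y *t ptraceA (k *: PhiI + PhiV)].

End Defs.

From Pilot Require Import Defs.
From HB Require Import structures.
From mathcomp Require Import all_boot all_order all_algebra.
From mathcomp Require Import reals.
From mathcomp Require Import complex mxtens.
From mathcomp Require Import ring.
Import Order.TTheory GRing.Theory Num.Theory.
Local Open Scope ring_scope.

(* Given a k-feasible pair, take  PhiI' = a PhiI + b PhiV  and
   PhiV' = b PhiI + a PhiV, with a, b >= 0 solving  k'^2 a + k' b = k^2,
   k'^2 b + k' a = k.  Since V^2 = 1 the new pair still satisfies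
   PhiV' = V PhiI', and every constraint at level k' is a nonnegative
   multiple of a constraint at level k:  PhiI' +- PhiV'  are multiples of
   PhiI +- PhiV,  k' PhiI' + PhiV'  and  PhiI'^T + k' PhiV'^T  are multiples
   of  k PhiI + PhiV  and  PhiI^T + k PhiV^T,  while  PhiI'^T  is a
   nonnegative combination of  PhiI^T  and  PhiI^T + k PhiV^T. *)

Section Operators.
Variable C : numClosedFieldType.

Lemma hermitianD p (A B : 'M[C]_p) :
  Defs.hermitian A -> Defs.hermitian B -> Defs.hermitian (A + B).
Proof. by rewrite /Defs.hermitian /adjmx map_mxD linearD /= => -> ->. Qed.

Lemma hermitianZ p (c : C) (A : 'M[C]_p) :
  c \is Num.real -> Defs.hermitian A -> Defs.hermitian (c *: A).
Proof.
by rewrite /Defs.hermitian /adjmx map_mxZ linearZ /= => /conj_Creal -> ->.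
Qed.

Lemma psdD p (A B : 'M[C]_p) : psd A -> psd B -> psd (A + B).
Proof.
move=> [hA pA] [hB pB]; split; first exact: hermitianD.
by move=> v; rewrite mulmxDr mulmxDl mxE addr_ge0.
Qed.

Lemma psdZ p (c : C) (A : 'M[C]_p) : 0 <= c -> psd A -> psd (c *: A).
Proof.
move=> c_ge0 [hA pA]; split; first exact/hermitianZ/hA/ger0_real.
by move=> v; rewrite -scalemxAr -scalemxAl mxE mulr_ge0.
Qed.

Lemma swapmxK n : swapmx C n *m swapmx C n = 1%:M.
Proof.
apply/matrixP=> i j; rewrite !mxE.
rewrite (reindex (@mxtens_index n n)) /=; last first.
  exact/onW_bij/(Bijective (@mxtens_indexK n n) (@mxtens_unindexK n n)).
under eq_bigr => p _ do rewrite !mxE mxtens_indexK.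
rewrite -(can_eq (@mxtens_unindexK n n)).
case: (mxtens_unindex i) => a b; case: (mxtens_unindex j) => c d /=.
rewrite (bigD1 (b, a)) //= big1 ?addr0; last first.
  move=> [p1 p2]; rewrite xpair_eqE => /nandP[/negPf p1b | /negPf p2a].
    by rewrite (eq_sym b) p1b andbF mul0r.
  by rewrite (eq_sym a) p2a mul0r.
by rewrite !eqxx mul1r xpair_eqE andbC.
Qed.

Lemma ptransAD p q (A B : 'M[C]_(p * q)) :
  ptransA (A + B) = ptransA A + ptransA B.
Proof. by apply/matrixP=> i j; rewrite !mxE. Qed.

Lemma ptransAZ p q (c : C) (A : 'M[C]_(p * q)) :
  ptransA (c *: A) = c *: ptransA A.
Proof. by apply/matrixP=> i j; rewrite !mxE. Qed.

Lemma ptraceAZ p q (c : C) (X : 'M[C]_(p * q)) :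
  ptraceA (c *: X) = c *: ptraceA X.
Proof.
by apply/matrixP=> i j; rewrite !mxE mulr_sumr; under eq_bigr do rewrite mxE.
Qed.

Lemma mapAZ p q r (L : 'M[C]_p -> 'M[C]_r) (c : C) (X : 'M[C]_(p * q)) :
  mapA L (c *: X) = c *: mapA L X.
Proof.
apply/matrixP=> i j; rewrite !mxE mulr_sumr; apply: eq_bigr => a _.
by rewrite mulr_sumr; apply: eq_bigr => b _; rewrite !mxE mulrCA.
Qed.

Lemma tensmxZr p q r s (Y : 'M[C]_(p, q)) (c : C) (X : 'M[C]_(r, s)) :
  Y *t (c *: X) = c *: (Y *t X).
Proof. by apply/matrixP=> i j; rewrite !mxE mulrCA. Qed.

Lemma mapA_tensZ p q r (L : 'M[C]_p -> 'M[C]_r) (Y : 'M[C]_r) (c : C)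
    (X : 'M[C]_(p * q)) :
  mapA L X = Y *t ptraceA X -> mapA L (c *: X) = Y *t ptraceA (c *: X).
Proof. by rewrite mapAZ ptraceAZ tensmxZr => ->. Qed.

Lemma scale_pairD p q (a b : C) (A B : 'M[C]_(p, q)) :
  (a *: A + b *: B) + (b *: A + a *: B) = (a + b) *: (A + B).
Proof. by apply/matrixP=> i j; rewrite !mxE; ring. Qed.

Lemma scale_pairB p q (a b : C) (A B : 'M[C]_(p, q)) :
  (a *: A + b *: B) - (b *: A + a *: B) = (a - b) *: (A - B).
Proof. by apply/matrixP=> i j; rewrite !mxE; ring. Qed.

Lemma scale_pair_comb p q (x y a b : C) (A B : 'M[C]_(p, q)) :
  x *: (a *: A + b *: B) + y *: (b *: A + a *: B)
  = (x * a + y * b) *: A + (x * b + y * a) *: B.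
Proof. by apply/matrixP=> i j; rewrite !mxE; ring. Qed.

End Operators.

Section Lift.
Variables (C : numClosedFieldType) (k k' : C).
Hypotheses (k_ge1 : 1 <= k) (lt_kk' : k < k').

(* The unique solution of  k'^2 a + k' b = k^2,  k'^2 b + k' a = k. *)
Let a := k * (k * k' - 1) / (k' * (k' ^+ 2 - 1)).
Let b := k * (k' - k) / (k' * (k' ^+ 2 - 1)).

Let k'_gt1 : 1 < k'. Proof. exact: le_lt_trans lt_kk'. Qed.
Let k_ge0 : 0 <= k. Proof. exact: le_trans ler01 k_ge1. Qed.
Let k'_ge0 : 0 <= k'. Proof. exact/ltW/lt_trans/k'_gt1. Qed.
Let ksqB1_ge0 : 0 <= k ^+ 2 - 1. Proof. by rewrite subr_ge0 expr_ge1. Qed.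
Let k'sqB1_gt0 : 0 < k' ^+ 2 - 1. Proof. by rewrite subr_gt0 exprn_egt1. Qed.

Let k_neq0 : k != 0. Proof. by rewrite gt_eqF // (lt_le_trans ltr01). Qed.
Let k'_neq0 : k' != 0. Proof. by rewrite gt_eqF // (lt_trans ltr01). Qed.
Let k'B1_neq0 : k' - 1 != 0. Proof. by rewrite subr_eq0 gt_eqF. Qed.
Let coef_den_neq0 := (k_neq0, k'_neq0, k'B1_neq0, lt0r_neq0 k'sqB1_gt0).

Lemma lift_coef_ge0 : 0 <= a /\ 0 <= b.
Proof.
have kk'_ge1 : 1 <= k * k' by rewrite mulr_ege1 // ltW.
have den_ge0 : 0 <= k' * (k' ^+ 2 - 1) by rewrite mulr_ge0 // ltW.
by split; rewrite divr_ge0 // mulr_ge0 // subr_ge0 // ltW.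
Qed.

Lemma lift_coef_diff : a - b = k * (k - 1) / (k' * (k' - 1)).
Proof. by rewrite /a /b; field; rewrite ?coef_den_neq0. Qed.

Lemma lift_coef_mixI : k' * a + b = k / k' * k.
Proof. by rewrite /a /b; field; rewrite ?coef_den_neq0. Qed.

Lemma lift_coef_mixV : k' * b + a = k / k'.
Proof. by rewrite /a /b; field; rewrite ?coef_den_neq0. Qed.

Lemma lift_coef_weightI : k' ^+ 2 * a + k' * b = k ^+ 2.
Proof. by rewrite /a /b; field; rewrite ?coef_den_neq0. Qed.

Lemma lift_coef_weightV : k' ^+ 2 * b + k' * a = k.
Proof. by rewrite /a /b; field; rewrite ?coef_den_neq0. Qed.

Lemma lift_coef_split : a = (k ^+ 2 - 1) / (k' ^+ 2 - 1) + b / k.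
Proof. by rewrite /a /b; field; rewrite ?coef_den_neq0. Qed.

Section Pair.
Variables (n m : nat) (L : 'M[C]_n -> 'M[C]_m) (Y : 'M[C]_m).
Variables (PhiI PhiV : 'M[C]_(n * n)).

Lemma lift_weighted_sum :
  k' ^+ 2 *: (a *: PhiI + b *: PhiV) + k' *: (b *: PhiI + a *: PhiV)
  = k ^+ 2 *: PhiI + k *: PhiV.
Proof. by rewrite scale_pair_comb lift_coef_weightI lift_coef_weightV. Qed.

Lemma feasible_lift : feasible L Y k PhiI PhiV ->
  feasible L Y k' (a *: PhiI + b *: PhiV) (b *: PhiI + a *: PhiV).
Proof.
move=> [[hI hV] defV [sum_psd diff_psd ptk_psd pt_psd] tr1 marg].
have [a_ge0 b_ge0] := lift_coef_ge0.
have swapV : swapmx C n *m PhiV = PhiI by rewrite defV mulmxA swapmxK mul1mx.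
split.
- by split; apply: hermitianD; apply: hermitianZ; rewrite ?ger0_real.
- by rewrite mulmxDr -!scalemxAr swapV -defV addrC.
- rewrite !ptransAD !ptransAZ; split.
  + by rewrite scale_pairD; apply: psdZ sum_psd; rewrite addr_ge0.
  + rewrite scale_pairB; apply: psdZ diff_psd.
    by rewrite lift_coef_diff divr_ge0 ?mulr_ge0 // subr_ge0 // ltW.
  + rewrite -[X in X + _]scale1r scale_pair_comb !mul1r.
    rewrite [a + _]addrC [b + _]addrC lift_coef_mixI lift_coef_mixV.
    rewrite -(scalerA (k / k') k) -scalerDr.
    by apply: psdZ ptk_psd; rewrite divr_ge0.
  + set TI := ptransA PhiI; set TV := ptransA PhiV.
    have -> : a *: TI + b *: TV
              = (k ^+ 2 - 1) / (k' ^+ 2 - 1) *: TI + b / k *: (TI + k *: TV).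
      by rewrite scalerDr scalerA mulfVK // addrA -scalerDl -lift_coef_split.
    by apply: psdD; apply: psdZ => //; rewrite divr_ge0 // ltW.
- by rewrite -!mxtraceZ -mxtraceD lift_weighted_sum mxtraceD !mxtraceZ.
- have -> : k' *: (a *: PhiI + b *: PhiV) + (b *: PhiI + a *: PhiV)
            = k / k' *: (k *: PhiI + PhiV).
    rewrite -[X in _ + X]scale1r scale_pair_comb !mul1r.
    by rewrite lift_coef_mixI lift_coef_mixV scalerDr scalerA.
  exact: mapA_tensZ.
Qed.

End Pair.
End Lift.

Lemma feasible_monotone (C : numClosedFieldType) n m
    (L : 'M[C]_n -> 'M[C]_m) (Y : 'M[C]_m) (k k' : C)
    (PhiI PhiV : 'M[C]_(n * n)) :
  1 <= k -> k <= k' -> feasible L Y k PhiI PhiV ->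
  exists PhiI' PhiV' : 'M[C]_(n * n),
    feasible L Y k' PhiI' PhiV' /\
    k' ^+ 2 *: PhiI' + k' *: PhiV' = k ^+ 2 *: PhiI + k *: PhiV.
Proof.
(* The lifting coefficients divide by k'^2 - 1, which vanishes at k = k' = 1. *)
move=> k_ge1; rewrite le_eqVlt => /predU1P[<- feas | lt_kk' feas].
  by exists PhiI, PhiV.
by eexists; eexists; split; [exact: feasible_lift feas | exact: lift_weighted_sum].
Qed.

Theorem mainTheorem12 (R : realType) (n m : nat) (n_gt0 : (0 < n)%N)
    (m_gt0 : (0 < m)%N) (L : {linear 'M[R[i]]_n -> 'M[R[i]]_m})
    (Y : 'M[R[i]]_m) (k : R) (PhiI PhiV : 'M[R[i]]_(n * n)) :
  1 <= k ->
  feasible L Y (k%:C)%C PhiI PhiV ->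
  forall k' : R, k <= k' ->
  exists PhiI' PhiV' : 'M[R[i]]_(n * n),
    feasible L Y (k'%:C)%C PhiI' PhiV' /\
    (k'%:C)%C ^+ 2 *: PhiI' + (k'%:C)%C *: PhiV'
    = (k%:C)%C ^+ 2 *: PhiI + (k%:C)%C *: PhiV.
Proof.
move=> k_ge1 feas k' le_kk'.
apply: feasible_monotone feas; last by rewrite lecR.
by rewrite -[1]/(1%:C)%C lecR.
Qed.
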